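(* Let $T$ be a tree. The following are equivalent: (i) $T$ is rooted and Dedekind complete; (ii) any two elements of $T$ have a greatest lower bound; (iii) every nonempty subset of $T$ has a greatest lower bound.
   Context: A tree is a partially ordered set in which the set of predecessors of each element is well-ordered. $T$ is rooted if it has exactly one minimal element. For a chain $C$ that is bounded above, its pseudo-supremum is the set of minimal elements of the set of upper bounds of $C$. $T$ is Dedekind complete if the pseudo-supremum of every nonempty chain that is bounded above is a supremum, i.e. consists of a single element (the least upper bound). *)

From mathcomp Require Import all_boot all_order.
Set Implicit Arguments. Unset Strict Implicit. Unset Printing Implicit Defensive.
Import Order.TTheory.
Local Open Scope order_scope.

Section Trees.
Context {disp : Order.disp_t} {T : porderType disp}.

Definition is_chain (A : T -> Prop) : Prop :=
  forall a b, A a -> A b -> (a <= b) \/ (b <= a).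

Definition well_ordered (A : T -> Prop) : Prop :=
  is_chain A /\
  forall B : T -> Prop, (forall b, B b -> A b) -> (exists b, B b) ->
    exists m, B m /\ forall b, B b -> m <= b.

Definition is_tree : Prop :=
  forall x : T, well_ordered (fun y => y < x).

Definition minimal_elt (x : T) : Prop := forall y : T, ~ (y < x).

Definition rooted : Prop :=
  exists r : T, forall x : T, minimal_elt x <-> x = r.

Definition upper_bound (C : T -> Prop) (x : T) : Prop :=
  forall c, C c -> c <= x.

Definition lower_bound (A : T -> Prop) (x : T) : Prop :=
  forall a, A a -> x <= a.

Definition bounded_above (C : T -> Prop) : Prop := exists x, upper_bound C x.

Definition pseudo_sup (C : T -> Prop) (x : T) : Prop :=
  upper_bound C x /\ forall y, upper_bound C y -> ~ (y < x).

Definition dedekind_complete : Prop :=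
  forall C : T -> Prop, is_chain C -> (exists c, C c) -> bounded_above C ->
    exists s, forall x, pseudo_sup C x <-> x = s.

Definition is_glb (A : T -> Prop) (g : T) : Prop :=
  lower_bound A g /\ forall y, lower_bound A y -> y <= g.

Definition has_glb (A : T -> Prop) : Prop := exists g, is_glb A g.

End Trees.

(* A nonempty subset of a tree bounded above by x lies in the well-ordered set
   of predecessors of x together with x, hence has a least element; this
   produces minimal elements and pseudo-suprema.  Uniqueness of the root and of
   pseudo-suprema then follows from binary glbs: the glb of two minimal
   elements (or of two pseudo-suprema of one chain) is below both of them, so
   it equals both.  Conversely, the common lower bounds of x and y form a chain
   (they lie below x) containing the root and bounded by x, and its unique
   pseudo-supremum is the glb of x and y.  Finally, the glb of a nonempty set A
   is the least of the glbs of a fixed a in A with the elements of A. *)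

From mathcomp Require Import all_boot all_order.
From Stdlib Require Import Classical.
Local Open Scope order_scope.
Import Order.TTheory.

Local Notation pairset x y := (fun z => z = x \/ z = y).

Section TreeGlb.
Context {disp : Order.disp_t} {T : porderType disp}.
Implicit Types (x y z : T) (A B C : T -> Prop).

Lemma le_nlt_eq {x y} : x <= y -> ~ x < y -> x = y.
Proof. by rewrite le_eqVlt => /orP [/eqP //| xy] /(_ xy). Qed.

Lemma glb_pair_eq x y g :
  is_glb (pairset x y) g -> ~ g < x -> ~ g < y -> x = y.
Proof.
move=> [lbg _] gx gy.
rewrite -(le_nlt_eq (lbg x (or_introl erefl)) gx).
exact: le_nlt_eq (lbg y (or_intror erefl)) gy.
Qed.

Hypothesis treeT : is_tree (T := T).

Lemma down_set_chain x : is_chain (fun z => z <= x).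
Proof.
move=> a b; rewrite le_eqVlt => /orP [/eqP -> bx|ax].
  by right.
rewrite le_eqVlt => /orP [/eqP ->|bx]; first by left; exact: ltW.
exact: (proj1 (treeT x)).
Qed.

Lemma exists_least_below {x B} :
  (forall b, B b -> b <= x) -> (exists b, B b) ->
  exists m, B m /\ forall b, B b -> m <= b.
Proof.
move=> Bx [b0 Bb0].
case: (classic (exists b, B b /\ b < x)) => [Blt|noBlt].
  have [m [[Bm mx] mleast]] := proj2 (treeT x) _ (fun b Bb => proj2 Bb) Blt.
  exists m; split => // b Bb.
  have [bx|/negP] := boolP (b < x); first exact: mleast.
  by move/(le_nlt_eq (Bx b Bb)) => ->; exact: ltW.
have B_eq_x b : B b -> b = x.
  by move=> Bb; apply: (le_nlt_eq (Bx b Bb)) => bx; apply: noBlt; exists b.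
by exists b0; split => // b Bb; rewrite (B_eq_x b Bb) (B_eq_x b0 Bb0).
Qed.

Lemma exists_minimal_below z : exists m, minimal_elt m /\ m <= z.
Proof.
have [m [mz mleast]] := exists_least_below (fun b bz => bz) (ex_intro _ z (lexx z)).
exists m; split => // w wm.
by have := mleast w (le_trans (ltW wm) mz); rewrite lt_geF.
Qed.

Lemma exists_pseudo_sup {C u} :
  upper_bound C u -> exists m, pseudo_sup C m /\ m <= u.
Proof.
move=> Cu; pose B v := upper_bound C v /\ v <= u.
have [m [[Cm mu] mleast]] :=
  exists_least_below (fun v Bv => proj2 Bv) (ex_intro B u (conj Cu (lexx u))).
exists m; split => //; split => // y Cy ym.
by have := mleast y (conj Cy (le_trans (ltW ym) mu)); rewrite lt_geF.
Qed.

Lemma rooted_dedekind_glb_pair :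
  rooted (T := T) -> dedekind_complete (T := T) -> forall x y, has_glb (pairset x y).
Proof.
move=> [r rootE] DC x y.
have r_le z : r <= z.
  by have [m [/rootE <- //]] := exists_minimal_below z.
pose L z := z <= x /\ z <= y.
have chL : is_chain L.
  by move=> a b [ax _] [bx _]; exact: down_set_chain ax bx.
have [s supE] := DC L chL (ex_intro _ r (conj (r_le x) (r_le y)))
  (ex_intro _ x (fun c Lc => proj1 Lc)).
have [mx [/supE -> sx]] := exists_pseudo_sup (C := L) (fun c Lc => proj1 Lc).
have [my [/supE Emy sy]] := exists_pseudo_sup (C := L) (fun c Lc => proj2 Lc).
rewrite {}Emy in sy.
exists s; split; first by move=> a [->|->].
move=> z lbz; apply: (proj1 (proj2 (supE s) erefl)).
by split; apply: lbz; [left|right].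
Qed.

Hypothesis glb_pair : forall x y, has_glb (pairset x y).

Lemma glb_pair_rooted : inhabited T -> rooted (T := T).
Proof.
case=> t0; have [r [rmin _]] := exists_minimal_below t0.
exists r => x; split=> [xmin|-> //].
have [g glb_g] := glb_pair x r.
exact: glb_pair_eq glb_g (xmin g) (rmin g).
Qed.

Lemma glb_pair_dedekind_complete : dedekind_complete (T := T).
Proof.
move=> C _ _ [u Cu].
have [s [sup_s _]] := exists_pseudo_sup Cu.
exists s => x; split=> [sup_x|-> //].
have [g glb_g] := glb_pair x s.
have Cg : upper_bound C g.
  move=> c Cc; apply: (proj2 glb_g) => a [->|->];
    [exact: (proj1 sup_x) | exact: (proj1 sup_s)].
exact: glb_pair_eq glb_g (proj2 sup_x g Cg) (proj2 sup_s g Cg).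
Qed.

Lemma glb_pair_has_glb A : (exists a, A a) -> has_glb A.
Proof.
move=> [a Aa]; pose G g := exists2 b, A b & is_glb (pairset a b) g.
have G_le_a g : G g -> g <= a by move=> [b _ [lbg _]]; apply: lbg; left.
have [g0 glb_g0] := glb_pair a a.
have [m [[b Ab [_ glb_m]] mleast]] :=
  exists_least_below G_le_a (ex_intro G g0 (ex_intro2 _ _ a Aa glb_g0)).
exists m; split.
  move=> c Ac; have [g glb_g] := glb_pair a c.
  apply: le_trans (mleast g (ex_intro2 _ _ c Ac glb_g)) _.
  by apply: (proj1 glb_g); right.
by move=> z lbz; apply: glb_m => w [->|->]; exact: lbz.
Qed.

End TreeGlb.

Theorem theorem3p1 (disp : Order.disp_t) (T : porderType disp)
  (hT : @is_tree disp T) (hne : inhabited T) :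
  ((@rooted disp T /\ @dedekind_complete disp T) <->
     (forall x y : T, has_glb (fun z => z = x \/ z = y))) /\
  ((forall x y : T, has_glb (fun z => z = x \/ z = y)) <->
     (forall A : T -> Prop, (exists a, A a) -> has_glb A)).
Proof.
split; split.
- by move=> [rootT DC]; exact: rooted_dedekind_glb_pair hT rootT DC.
- move=> glb2; split; first exact: glb_pair_rooted hT glb2 hne.
  exact: glb_pair_dedekind_complete hT glb2.
- by move=> glb2 A; exact: glb_pair_has_glb hT glb2 A.
- by move=> glbA x y; apply: glbA; exists x; left.
Qed.
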